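(* Let $H$ be a countably infinite group. Then the set $D(H)=D_L(H)\cap D_R(H)$ is non-empty and $H$-bi-invariant.
   Context: $2^H$ denotes the set of all subsets of $H$ with the product topology (pointwise convergence of characteristic functions). $H$ acts on $2^H$ by left multiplication $S\mapsto hS$ (the left action) and by right multiplication $S\mapsto Sh$ (the right action). $D_L(H)$ (resp. $D_R(H)$) is the set of $S\subseteq H$ whose orbit under the left (resp. right) action, $\{hS:h\in H\}$ (resp. $\{Sh:h\in H\}$), is dense in $2^H$. A subset of $2^H$ is $H$-bi-invariant if it is invariant under both the left and the right action. *)

From HB Require Import structures.
From mathcomp Require Import all_boot all_order all_algebra.
From mathcomp Require Import all_classical all_reals all_analysis.
Set Implicit Arguments. Unset Strict Implicit. Unset Printing Implicit Defensive.
Local Open Scope classical_set_scope.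

Definition group_axioms (H : Type) (mul : H -> H -> H) (e : H) (inv : H -> H) : Prop :=
  [/\ (forall x y z, mul x (mul y z) = mul (mul x y) z),
      (forall x, mul e x = x), (forall x, mul x e = x),
      (forall x, mul (inv x) x = e) & (forall x, mul x (inv x) = e)].

(* 2^H : subsets of H as characteristic functions, with the product topology
   (pointwise convergence), bool being discrete. *)
Definition pow2 (H : Type) := {ptws H -> bool}.

Definition lact (H : Type) (mul : H -> H -> H) (h : H) (S : pow2 H) : pow2 H :=
  fun x => `[< exists s, S s /\ x = mul h s >].
Definition ract (H : Type) (mul : H -> H -> H) (h : H) (S : pow2 H) : pow2 H :=
  fun x => `[< exists s, S s /\ x = mul s h >].

Definition D_L (H : Type) (mul : H -> H -> H) : set (pow2 H) :=
  [set S | dense (range (fun h => lact mul h S))].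
Definition D_R (H : Type) (mul : H -> H -> H) : set (pow2 H) :=
  [set S | dense (range (fun h => ract mul h S))].
Definition D (H : Type) (mul : H -> H -> H) : set (pow2 H) := D_L mul `&` D_R mul.

Definition bi_invariant (H : Type) (mul : H -> H -> H) (X : set (pow2 H)) : Prop :=
  forall h S, X S -> X (lact mul h S) /\ X (ract mul h S).

From HB Require Import structures.
From mathcomp Require Import all_boot all_order all_algebra.
From mathcomp Require Import all_classical all_reals all_analysis.
Local Open Scope classical_set_scope.
Set Implicit Arguments.
Unset Strict Implicit.

(* A set S is in D_L(H) iff every finite pattern (a finite F in H with prescribed
   membership values) is matched on F by some left translate of S, and similarly
   for D_R; these conditions survive translating S on either side.  For a
   countable infinite H, enumerate the countably many finite patterns and realize
   the n-th one as a left translate (n even) or right translate (n odd) onto a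
   block of H disjoint from all earlier blocks, which exists because only finitely
   many translates meet a given finite set; S is then defined blockwise. *)

Definition cylinder (X : Type) (P : pow2 X) (F : set X) : set (pow2 X) :=
  [set S | forall x, F x -> S x = P x].

Lemma nbhs_coord (X : Type) (P : pow2 X) (x : X) : nbhs P [set S : pow2 X | S x = P x].
Proof.
have /cvg_sup/(_ x) : nbhs P --> P by apply: cvg_id.
apply; apply: open_nbhs_nbhs; split => //.
by exists [set P x]; first exact: discrete_open.
Qed.

Lemma nbhs_cylinder (X : Type) (P : pow2 X) (F : set X) :
  finite_set F -> nbhs P (cylinder P F).
Proof.
(* a classical choice structure on X turns F into an fset, as filter_bigI needs *)
elim/Pchoice: X => X in P F *; move=> /finite_fsetP[D ->].
apply: filterS (@filter_bigI _ _ D _ _ _ (fun x _ => nbhs_coord P x)) => S SD x Dx.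
exact: SD.
Qed.

Lemma cylinder_subset_nbhs (X : Type) (P : pow2 X) (O : set (pow2 X)) :
  nbhs P O -> exists2 F, finite_set F & cylinder P F `<=` O.
Proof.
have cyl_filter : Filter (filter_from finite_set (cylinder P)).
  apply: filter_from_filter; first by exists set0; exact: finite_set0.
  move=> F1 F2 F1fin F2fin; exists (F1 `|` F2); first by rewrite finite_setU.
  by move=> S SF; split=> x Fx; apply: SF; [left|right].
suff /(_ O) : filter_from finite_set (cylinder P) --> P by move=> PO /PO[F]; exists F.
apply/cvg_sup => x B; rewrite nbhsE => -[_ [[V _ <-] VP] VB].
exists [set x]; first exact: finite_set1.
by move=> S /(_ x erefl) Sx; apply: VB; rewrite /= Sx.
Qed.

Lemma dense_ptwsP (X : Type) (A : set (pow2 X)) :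
  dense A <-> forall (F : set X) (P : pow2 X), finite_set F -> exists2 S, A S & cylinder P F S.
Proof.
split=> [dA F P Ffin|cylA O [P OP] oO].
  have PF := nbhs_cylinder P Ffin.
  have [|S [/interior_subset FS AS]] := dA (interior (cylinder P F)) _ (@open_interior _ _).
    by exists P; exact: PF.
  by exists S.
have [F Ffin FO] := cylinder_subset_nbhs (open_nbhs_nbhs (conj oO OP)).
by have [S AS /FO OS] := cylA F P Ffin; exists S.
Qed.

Definition realizes_patterns (I X : Type) (phi : I -> X -> X) (S : pow2 X) :=
  forall (F : set X) (P : pow2 X), finite_set F -> exists i, cylinder P F (S \o phi i).

Lemma dense_orbitP (I X : Type) (phi : I -> X -> X) (S : pow2 X) :
  dense (range (fun i => S \o phi i : pow2 X)) <-> realizes_patterns phi S.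
Proof.
rewrite dense_ptwsP; split=> [dS F P /(dS F P)[_ [i _ <-] PS]|rS F P /(rS F P)[i PS]].
  by exists i.
by exists (S \o phi i) => //; exists i.
Qed.

Lemma realizes_patterns_comp_absorb (I X : Type) (phi : I -> X -> X) (psi : X -> X)
    (S : pow2 X) :
  (forall i, exists j, psi \o phi j =1 phi i) ->
  realizes_patterns phi S -> realizes_patterns phi (S \o psi).
Proof.
move=> absorb rS F P /(rS F P)[i PS]; have [j ji] := absorb i.
by exists j => x Fx /=; rewrite -PS //= -ji.
Qed.

Lemma realizes_patterns_comp_commute (I X : Type) (phi : I -> X -> X) (psi psi' : X -> X)
    (S : pow2 X) :
  cancel psi psi' -> (forall i, psi \o phi i =1 phi i \o psi) ->
  realizes_patterns phi S -> realizes_patterns phi (S \o psi).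
Proof.
move=> psiK comm rS F P Ffin.
have [i PS] := rS (psi @` F) (P \o psi') (finite_image psi Ffin).
exists i => x Fx; have := PS (psi x) (imageP psi Fx); rewrite /= psiK => <-.
by move: (comm i x) => /= ->.
Qed.

Section DisjointPlacement.
Variables (X : Type) (Y : nat -> set X) (pick : nat -> set X -> X -> X).
Hypothesis finite_Y : forall n, finite_set (Y n).

Fixpoint used n : set X := if n is m.+1 then used m `|` pick m (used m) @` Y m else set0.

Definition place n := pick n (used n).

Lemma finite_used n : finite_set (used n).
Proof.
elim: n => [|n IH] /=; first exact: finite_set0.
by rewrite finite_setU; split; last exact: finite_image.
Qed.

Lemma used_mono m n : (m <= n)%N -> used m `<=` used n.
Proof.
move/subnK <-; elim: (n - m)%N => [|k IH] //=.
by apply: subset_trans IH _; exact: subsetUl.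
Qed.

Hypothesis pick_fresh : forall n U, finite_set U -> pick n U @` Y n `<=` ~` U.

Lemma place_disjoint m n x y : Y m x -> Y n y -> place m x = place n y -> m = n.
Proof.
wlog lt_mn : m n x y / (m < n)%N => [wlog|Ymx Yny mn_xy].
  move=> Ymx Yny mn_xy; case: (ltngtP m n) => [lt_mn|lt_nm|//].
    exact: wlog Ymx Yny mn_xy.
  by apply/esym/(wlog n m y x).
have := pick_fresh (finite_used n) (imageP _ Yny); rewrite -/(place n y) -mn_xy.
move=> fresh; exfalso; apply: fresh.
by apply: (used_mono lt_mn); right; exists x.
Qed.

Variable Q : nat -> X -> bool.
Hypothesis pick_inj : forall n U, finite_set U -> injective (pick n U).

Definition placed_patterns : pow2 X :=
  fun x => `[< exists n y, [/\ Y n y, Q n y & x = place n y] >].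

Lemma placed_patternsE n y : Y n y -> placed_patterns (place n y) = Q n y.
Proof.
move=> Yny; apply/asboolP/idP => [[m [z [Ymz Qmz yz]]]|Qny]; last by exists n, y.
have mn := place_disjoint Ymz Yny (esym yz); subst m.
by rewrite (pick_inj (finite_used n) yz).
Qed.

End DisjointPlacement.

Lemma exists_placed_patterns (X : Type) (Y : nat -> set X) (Q : nat -> X -> bool)
    (C : nat -> (X -> X) -> Prop) :
  (forall n, finite_set (Y n)) ->
  (forall n U, finite_set U -> exists2 t, C n t /\ injective t & t @` Y n `<=` ~` U) ->
  exists2 t : nat -> X -> X, (forall n, C n (t n)) &
    exists S : pow2 X, forall n y, Y n y -> S (t n y) = Q n y.
Proof.
move=> finite_Y avoid.
have /choice[pick pickP] : forall nU : nat * set X, exists t, finite_set nU.2 ->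
    [/\ C nU.1 t, injective t & t @` Y nU.1 `<=` ~` nU.2].
  move=> [n U]; have [Ufin|Uinf] := pselect (finite_set U); last by exists id => /Uinf.
  by have [t [Ct tinj] fresh] := avoid n U Ufin; exists t.
pose pick' n U := pick (n, U).
have pick'P n U : finite_set U -> [/\ C n (pick' n U), injective (pick' n U)
    & pick' n U @` Y n `<=` ~` U] := pickP (n, U).
exists (place Y pick') => [n|]; first by have [] := pick'P n _ (finite_used pick' finite_Y n).
have fresh n U : finite_set U -> pick' n U @` Y n `<=` ~` U by move=> /(pick'P n)[].
have inj n U : finite_set U -> injective (pick' n U) by move=> /(pick'P n)[].
by exists (placed_patterns Y pick' Q) => n y; exact: placed_patternsE finite_Y fresh Q inj n y.
Qed.

Lemma finite_nat_bounded (A : set nat) : finite_set A -> exists m, A `<=` `I_m.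
Proof.
move=> /finite_seqP[s ->]; exists (\max_(i <- s) i).+1 => i si.
by rewrite /= ltnS; exact: (leq_bigmax_seq (F := id)).
Qed.

Section PatternEnumeration.
Variables (X : Type) (f : X -> nat) (en : nat -> X).
Hypothesis fK : cancel f en.

(* The n-th pattern is the bit string coded by n, read on en 0, en 1, ... *)
Let bits n : seq bool := odflt [::] (unpickle n).

Definition pattern_dom n : set X := en @` `I_(size (bits n)).
Definition pattern_val n : pow2 X := fun x => nth false (bits n) (f x).

Lemma finite_pattern_dom n : finite_set (pattern_dom n).
Proof. exact/finite_image/finite_II. Qed.

Lemma pattern_enum (F : set X) (P : pow2 X) :
  finite_set F -> exists n, F `<=` pattern_dom n /\ cylinder P F (pattern_val n).
Proof.
move=> /(finite_image f)/finite_nat_bounded[m fF].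
exists (pickle [seq P (en i) | i <- iota 0 m]).
rewrite /pattern_dom /pattern_val /bits pickleK /= size_map size_iota.
split=> x Fx; have fxm : (f x < m)%N := fF _ (imageP f Fx).
  by exists (f x); rewrite ?fK.
by rewrite (nth_map 0%N) ?size_iota // nth_iota // add0n fK.
Qed.

End PatternEnumeration.

Section Translations.
Variables (H : Type) (mul : H -> H -> H) (e : H) (inv : H -> H).
Hypothesis G : group_axioms mul e inv.

Let mulA : associative mul. Proof. by case: G. Qed.
Let mul1g : left_id e mul. Proof. by case: G. Qed.
Let mulg1 : right_id e mul. Proof. by case: G. Qed.
Let mulVg x : mul (inv x) x = e. Proof. by case: G. Qed.
Let mulgV x : mul x (inv x) = e. Proof. by case: G. Qed.

Let mulKg x : cancel (mul x) (mul (inv x)).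
Proof. by move=> y; rewrite mulA mulVg mul1g. Qed.
Let mulKVg x : cancel (mul (inv x)) (mul x).
Proof. by move=> y; rewrite mulA mulgV mul1g. Qed.
Let mulgK x : cancel (mul^~ x) (mul^~ (inv x)).
Proof. by move=> y; rewrite -mulA mulgV mulg1. Qed.
Let mulgKV x : cancel (mul^~ (inv x)) (mul^~ x).
Proof. by move=> y; rewrite -mulA mulVg mulg1. Qed.
Let invgK : involutive inv.
Proof. by move=> x; rewrite -[inv (inv x)]mulg1 -(mulVg x) mulA mulVg mul1g. Qed.

Lemma lactE h S : lact mul h S = S \o mul (inv h).
Proof.
apply/funext => x; apply/asboolP/idP => [[s [Ss ->]]|Sx]; first by rewrite /= mulKg.
by exists (mul (inv h) x); rewrite mulKVg.
Qed.

Lemma ractE h S : ract mul h S = S \o mul^~ (inv h).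
Proof.
apply/funext => x; apply/asboolP/idP => [[s [Ss ->]]|Sx]; first by rewrite /= mulgK.
by exists (mul x (inv h)); rewrite mulgKV.
Qed.

Lemma D_LP S : D_L mul S <-> realizes_patterns mul S.
Proof.
rewrite -dense_orbitP /D_L /=.
suff -> : range (fun h => lact mul h S) = range (fun k => S \o mul k) by [].
by apply/seteqP; split=> _ [h _ <-]; exists (inv h); rewrite ?lactE ?invgK.
Qed.

Lemma D_RP S : D_R mul S <-> realizes_patterns (fun k x => mul x k) S.
Proof.
rewrite -dense_orbitP /D_R /=.
suff -> : range (fun h => ract mul h S) = range (fun k => S \o mul^~ k) by [].
by apply/seteqP; split=> _ [h _ <-]; exists (inv h); rewrite ?ractE ?invgK.
Qed.

Lemma D_lact g S : D mul S -> D mul (lact mul g S).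
Proof.
move=> [/D_LP SL /D_RP SR]; rewrite lactE; split.
  apply/D_LP; apply: realizes_patterns_comp_absorb SL => k.
  by exists (mul g k) => x /=; rewrite -mulA mulKg.
apply/D_RP; apply: realizes_patterns_comp_commute SR => [|k x /=]; first exact: mulKVg.
exact: mulA.
Qed.

Lemma D_ract g S : D mul S -> D mul (ract mul g S).
Proof.
move=> [/D_LP SL /D_RP SR]; rewrite ractE; split.
  apply/D_LP; apply: realizes_patterns_comp_commute SL => [|k x /=]; first exact: mulgKV.
  by rewrite mulA.
apply/D_RP; apply: realizes_patterns_comp_absorb SR => k.
by exists (mul k g) => x /=; rewrite mulA mulgK.
Qed.

Lemma D_bi_invariant : bi_invariant mul (D mul).
Proof. by move=> g S DS; split; [exact: D_lact | exact: D_ract]. Qed.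

Lemma left_translate_fresh (Y U : set H) :
  infinite_set [set: H] -> finite_set Y -> finite_set U -> exists k, mul k @` Y `<=` ~` U.
Proof.
move=> Hinf Yfin Ufin.
have [k [_ bad]] := infinite_setN0 (infinite_setD Hinf
  (finite_image2 (fun u y => mul u (inv y)) Ufin Yfin)).
by exists k => _ [y Yy <-] Uky; apply: bad; exists (mul k y) => //; exists y; rewrite ?mulgK.
Qed.

Lemma right_translate_fresh (Y U : set H) :
  infinite_set [set: H] -> finite_set Y -> finite_set U -> exists k, mul^~ k @` Y `<=` ~` U.
Proof.
move=> Hinf Yfin Ufin.
have [k [_ bad]] := infinite_setN0 (infinite_setD Hinf
  (finite_image2 (fun y u => mul (inv y) u) Yfin Ufin)).
by exists k => _ [y Yy <-] Uyk; apply: bad; exists y => //; exists (mul y k); rewrite ?mulKg.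
Qed.

Lemma D_nonempty : ([set: H] #= [set: nat])%card -> D mul !=set0.
Proof.
move=> Hc; have Hinf : infinite_set [set: H].
  by rewrite (eq_finite_set Hc); exact: infinite_nat.
have [f fbij] := card_set_bijP Hc; have [en fK _] : bijective f by rewrite -setTT_bijective.
pose C n (t : H -> H) := if odd n then exists k, t = mul^~ k else exists k, t = mul k.
have avoid n U : finite_set U ->
    exists2 t, C n t /\ injective t & t @` pattern_dom en n./2 `<=` ~` U.
  move=> Ufin; have Yfin := finite_pattern_dom en n./2; rewrite /C; case: (odd n).
    have [k fresh] := right_translate_fresh Hinf Yfin Ufin.
    by exists (mul^~ k) => //; split; [exists k | exact: can_inj (mulgK k)].
  have [k fresh] := left_translate_fresh Hinf Yfin Ufin.
  by exists (mul k) => //; split; [exists k | exact: can_inj (mulKg k)].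
have [t Ct [S SE]] := exists_placed_patterns (fun n => pattern_val f n./2)
  (fun n => finite_pattern_dom en n./2) avoid.
exists S; split.
  apply/D_LP => F P /(pattern_enum fK P)[n [FY FP]].
  have := Ct n.*2; rewrite /C odd_double => -[k tk].
  exists k => x Fx; have := SE n.*2 x; rewrite /= tk doubleK -FP //; apply; exact: FY.
apply/D_RP => F P /(pattern_enum fK P)[n [FY FP]].
have := Ct n.*2.+1; rewrite /C /= odd_double => -[k tk].
exists k => x Fx; have := SE n.*2.+1 x; rewrite /= tk uphalf_double -FP //; apply; exact: FY.
Qed.

End Translations.

Theorem proposition3p2 (H : Type) (mul : H -> H -> H) (e : H) (inv : H -> H) :
  group_axioms mul e inv ->
  ([set: H] #= [set: nat])%card ->
  D mul !=set0 /\ bi_invariant mul (D mul).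
Proof. by move=> G Hc; split; [exact: D_nonempty G Hc | exact: D_bi_invariant G]. Qed.
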